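(* Let $P_0$ be a probability distribution on $\mathbb{R}^{d_0}$ with compact support $S$, let $\epsilon>0$, and let $\mathcal{P}(P_0,\epsilon)=\{P : W_\infty(P_0,P)\le \epsilon\}$. Let $g:\mathbb{R}^{d_0}\to\mathbb{R}^{d}$ ($d<d_0$) be continuous with a continuous map $g^{-1}:\mathbb{R}^d\to\mathbb{R}^{d_0}$, and let $\ell(\bm\theta,\cdot):\mathbb{R}^{d_0}\to[0,M]$ be a continuous loss satisfying the on-manifold assumption $\ell(\bm\theta,\bm x)=\ell(\bm\theta,g^{-1}(g(\bm x)))$ for all $\bm x\in\mathbb{R}^{d_0}$. Define $$\epsilon_z=\sup_{\bm x\in S}\ \sup_{\|\bm\delta_x\|_\infty\le\epsilon}\|g(\bm x)-g(\bm x+\bm\delta_x)\|_\infty .$$ Then $$\sup_{P\in\mathcal{P}(P_0,\epsilon)}\mathbb{E}_{\bm x'\sim P}[\ell(\bm\theta,\bm x')]\ \le\ \mathbb{E}_{\bm x\sim P_0}\Big[\sup_{\|\bm\delta_z\|_\infty\le\epsilon_z}\ell\big(\bm\theta,g^{-1}(g(\bm x)+\bm\delta_z)\big)\Big].$$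
   Context: $W_\infty$ denotes the $\infty$-Wasserstein distance, $W_\infty(P,Q)=\inf_{\lambda\in\Lambda(P,Q)}\operatorname{ess\,sup}_{(x,y)\sim\lambda}\|x-y\|_\infty$, where $\Lambda(P,Q)$ is the set of couplings of $P$ and $Q$. The loss $\ell(\bm\theta,\bm x)=\mathbb{E}_{y\sim P_{y\mid\bm x}}[\mathcal{L}(\bm\theta,\bm x,y)]$ is the expected classification loss of a model with parameters $\bm\theta$ at input $\bm x$; $\bm\theta$ is fixed throughout. The map $g$ is a projection onto a lower-dimensional ''primary feature'' (latent) space and $g^{-1}$ a reconstruction map; the on-manifold assumption says reconstruction preserves the loss for all inputs, including those from distributions in $\mathcal{P}(P_0,\epsilon)$. *)

From HB Require Import structures.
From mathcomp Require Import all_boot all_order all_algebra.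
From mathcomp Require Import all_classical all_reals all_analysis ess_sup_inf.
Set Implicit Arguments. Unset Strict Implicit. Unset Printing Implicit Defensive.
Import Order.TTheory GRing.Theory Num.Theory.
Import numFieldNormedType.Exports.
Local Open Scope classical_set_scope.
Local Open Scope ring_scope.

(* R^n is modelled as row vectors 'rV[R]_n; their norm `|x| in
   MathComp-Analysis is the max-norm, i.e. the l_infinity norm.
   We equip 'rV[R]_n with its Borel sigma-algebra (generated by open sets). *)
Section borel_rV.
Variables (R : realType) (n : nat).
HB.instance Definition _ :=
  Measurable.copy 'rV[R]_n (g_sigma_algebraType (@open 'rV[R]_n)).
End borel_rV.

Section Winf.
Variables (R : realType) (n : nat).

Definition coupling (P Q : probability 'rV[R]_n R)
    (lam : probability ('rV[R]_n * 'rV[R]_n)%type R) : Prop :=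
  (forall A, measurable A -> lam (A `*` setT) = P A) /\
  (forall B, measurable B -> lam (setT `*` B) = Q B).

Definition W_inf (P Q : probability 'rV[R]_n R) : \bar R :=
  ereal_inf [set ess_sup lam (fun z => (`|z.1 - z.2|)%:E) | lam in coupling P Q].

(* support of a probability measure: points all of whose (open) balls
   have positive measure; this is the smallest closed set of full measure. *)
Definition prob_support (P : probability 'rV[R]_n R) : set 'rV[R]_n :=
  [set x | forall e : R, 0 < e -> (0 < P (ball x e))%E].

End Winf.

From HB Require Import structures.
From mathcomp Require Import all_boot all_order all_algebra.
From mathcomp Require Import all_classical all_reals all_analysis.
From mathcomp Require Import measurable_realfun ess_sup_inf.
Import Order.TTheory GRing.Theory Num.Theory.
Import numFieldNormedType.Exports.
Local Open Scope classical_set_scope.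
Local Open Scope ring_scope.

(* Fix P with W_inf P0 P <= eps and gam > 0.  The infimum defining W_inf need
   not be attained, so take a coupling under which |x' - x| <= eps + eta almost
   surely for a small eta > 0; P0-almost every x lies in the support S.  Split
   x' - x = dx + w with |dx| <= eps and |w| <= eta.  Uniform continuity of ell
   near the compact S gives ell x' <= ell (x + dx) + gam, and the on-manifold
   identity rewrites ell (x + dx) as ell (ginv (g x + dz)) with
   dz = g (x + dx) - g x, which has norm at most eps_z by the very definition
   of eps_z.  Integrating this pointwise bound along the coupling gives
   E_P ell <= E_P0 [worst latent loss] + gam for every gam > 0. *)

Section rV_topology.
Context {R : realType} {n : nat}.
Implicit Types (A U : set 'rV[R]_n) (P : {measure set 'rV[R]_n -> \bar R}).

Lemma rV_open_measurable U : open U -> measurable U.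
Proof. by move=> oU; apply: sub_sigma_algebra. Qed.

Lemma closed_norm_le (r : R) : closed [set x : 'rV[R]_n | `|x| <= r].
Proof.
exact: (preimage_closed (fun x _ => @norm_continuous _ _ x) (@closed_le _ r)).
Qed.

Lemma compact_norm_le (r : R) : compact [set x : 'rV[R]_n | `|x| <= r].
Proof.
apply: bounded_closed_compact; last exact: closed_norm_le.
exists r; split; first exact: num_real.
by move=> M rM x /= xr; apply: le_trans xr (ltW rM).
Qed.

Definition locally_null P A :=
  forall x, A x -> exists2 e : R, 0 < e & P (ball x e) = 0%E.

Lemma compact_locally_null_negligible P A :
  compact A -> locally_null P A -> P.-negligible A.
Proof.
move=> cA Anull.
(* [F] is the filter of supersets of null sets: covering [A] along [F] by
   compactness yields finitely many null balls. *)
pose F : set_system (set 'rV[R]_n) := fun Q =>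
  exists2 N, P.-negligible N & forall U, N `<=` U -> Q U.
have FF : Filter F.
  constructor.
  - by exists set0 => //; exact: negligible_set0.
  - move=> Q1 Q2 [N1 n1 h1] [N2 n2 h2]; exists (N1 `|` N2).
      exact: negligibleU.
    by move=> U NU; split; [apply: h1|apply: h2]; apply: subset_trans NU.
  - by move=> Q1 Q2 Q12 [N nN hN]; exists N => // U /hN; apply: Q12.
have : \forall U \near F, A `<=` U.
  apply: ((compact_near_coveringP A).1 cA _ F (fun U x => U x)) => x Ax.
  have [e e0 Pe] := Anull x Ax.
  exists (ball x e, [set U | ball x e `<=` U]); first split => /=.
  - exact: nbhsx_ballx.
  - exists (ball x e) => //.
    by apply/negligibleP => //; apply: rV_open_measurable; exact: ball_open.
  by move=> [x' U] [/= bx' bU]; apply: bU.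
by move=> [N nN hN]; apply: negligibleS nN; exact: hN.
Qed.

Lemma open_locally_null_negligible P U :
  open U -> locally_null P U -> P.-negligible U.
Proof.
move=> oU Unull.
(* The [C k] are compact and exhaust [U]. *)
pose C k := [set x : 'rV[R]_n | `|x| <= k%:R] `&`
  \bigcap_(s in ~` U) [set x | k.+1%:R^-1 <= `|x - s|].
have CU k : C k `<=` U.
  move=> x [_ xC]; apply/not_notP => nUx.
  by have := xC x nUx; rewrite /= subrr normr0 leNgt invr_gt0 ltr0Sn.
apply: (negligibleS _ (negligible_bigcup (F := C) _)).
  move=> x Ux; have /nbhs_ballP [r /= r0 rU] := oU x Ux.
  have xr0 : 0 <= `|x| + r^-1 by rewrite addr_ge0 // invr_ge0 ltW.
  have xrk := archi_boundP xr0; set k := Num.bound _ in xrk.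
  exists k => //; split => [|s /= nUs].
    by apply: le_trans (ltW xrk); rewrite lerDl invr_ge0 ltW.
  rewrite leNgt; apply/negP => xs; apply: nUs; apply: rU.
  rewrite -ball_normE /=; apply: lt_le_trans xs _.
  rewrite -[leRHS]invrK lef_pV2 ?posrE ?invr_gt0 ?ltr0Sn //.
  have rk : r^-1 < k%:R by apply: le_lt_trans xrk; rewrite lerDr.
  by apply: le_trans (ltW rk) _; rewrite ler_nat.
move=> k; apply: compact_locally_null_negligible => [|x /CU]; last exact: Unull.
apply: (subclosed_compact _ (compact_norm_le k%:R)); last by move=> x [].
apply: closedI; first exact: closed_norm_le.
apply: closed_bigI => s _.
apply: (preimage_closed _ (@closed_ge _ k.+1%:R^-1)) => x _.
apply: (@continuous_comp _ _ _ (fun y => y - s) Num.norm).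
  by apply: continuousB; [exact: cvg_id | exact: cst_continuous].
exact: norm_continuous.
Qed.

End rV_topology.

Section prob_support.
Context {R : realType} {n : nat}.
Variable (P : probability 'rV[R]_n R).

Lemma prob_supportC_locally_null : locally_null P (~` prob_support P).
Proof.
move=> x /existsNP [e /not_implyP [e0 /negP]]; rewrite -leNgt => Pe.
by exists e => //; apply/eqP; rewrite eq_le Pe measure_ge0.
Qed.

Lemma open_prob_supportC : open (~` prob_support P).
Proof.
move=> x /prob_supportC_locally_null [e e0 Pe]; apply/nbhs_ballP.
exists (e / 2) => /=; first by rewrite divr_gt0.
move=> y xy /(_ (e / 2)); rewrite divr_gt0 // => /(_ isT).
rewrite -Pe; apply/negP; rewrite -leNgt le_measure ?inE //;
  try by apply: rV_open_measurable; exact: ball_open.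
move=> z yz; rewrite -ball_normE /= in xy yz *.
rewrite [e]splitr (le_lt_trans (ler_distD y _ _)) // ltrD //.
Qed.

Lemma prob_support_ae : {ae P, forall x, prob_support P x}.
Proof.
apply: open_locally_null_negligible; first exact: open_prob_supportC.
exact: prob_supportC_locally_null.
Qed.

End prob_support.

Section semicontinuity.
Context {R : realType} {n : nat}.

Lemma lower_semicontinuous_ereal_sup {T : topologicalType} {I : Type}
    (A : set I) (f : I -> T -> R) : (forall i, continuous (f i)) ->
  lower_semicontinuous (fun x => ereal_sup [set (f i x)%:E | i in A]).
Proof.
move=> cf; apply/lower_semicontinuousP => r.
have -> : [set x | (r%:E < ereal_sup [set (f i x)%:E | i in A])%E] =
    \bigcup_(i in A) (f i @^-1` [set y | r < y]).
  apply/seteqP; split => x /=.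
    by move=> /ereal_sup_gt [_ [i Ai <-]]; rewrite lte_fin => ?; exists i.
  move=> [i Ai fir]; apply: (@lt_le_trans _ _ (f i x)%:E).
    by rewrite lte_fin.
  by apply: ereal_sup_ubound; exists i.
apply: bigcup_open => i _.
by apply: open_comp => // x _; apply: cf; apply: open_gt.
Qed.

Lemma rV_lower_semicontinuous_measurable (f : 'rV[R]_n -> \bar R) :
  lower_semicontinuous f -> measurable_fun setT f.
Proof.
move=> /lower_semicontinuousP lsc_f.
apply: (measurability _ (ErealGenOInfty.measurableE R)).
move=> _ [_ [r ->] <-]; rewrite setTI preimage_itvoy.
by apply: sub_sigma_algebra; exact: lsc_f.
Qed.

Lemma rV_continuous_measurable (f : 'rV[R]_n -> R) : continuous f ->
  measurable_fun setT (fun x => (f x)%:E).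
Proof.
move=> cf.
apply: rV_lower_semicontinuous_measurable; apply/lower_semicontinuousP => a.
rewrite (_ : [set x | _] = f @^-1` [set y | a < y]); last first.
  by apply/seteqP; split => x /=; rewrite lte_fin.
by apply: open_comp => // x _; apply: cf; apply: open_gt.
Qed.

End semicontinuity.

Lemma compact_uniform_continuity {R : realType} {V : normedModType R}
    (K : set V) (f : V -> R) : compact K -> continuous f ->
  forall e : R, 0 < e -> exists2 eta : R, 0 < eta &
    forall x y, K x -> `|x - y| < eta -> `|f x - f y| < e.
Proof.
move=> cK cf e e0.
have : \forall eta \near (0 : R), K `<=`
    (fun x => forall y, `|x - y| < eta -> `|f x - f y| < e).
  apply: ((compact_near_coveringP K).1 cK R (nbhs (0 : R))
     (fun eta x => forall y, `|x - y| < eta -> `|f x - f y| < e)) => x Kx.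
  have /cvgrPdist_lt /(_ (e / 2)) := cf x.
  rewrite divr_gt0 // => /(_ isT) /nbhs_ballP [r /= r0 fxr].
  have {}fxr t : `|x - t| < r -> `|f x - f t| < e / 2.
    by move=> xt; apply: fxr; rewrite -ball_normE.
  have r20 : 0 < r / 2 by rewrite divr_gt0.
  exists (ball x (r / 2), ball (0 : R) (r / 2)).
    by split; exact: nbhsx_ballx.
  move=> [x' eta] [/= xx' eta0] y x'y.
  rewrite -ball_normE /= in xx'.
  move: eta0; rewrite /ball /= sub0r normrN => eta0.
  have fx' : `|f x - f x'| < e / 2.
    apply: fxr; apply: lt_trans xx' _.
    by rewrite ltr_pdivrMr // ltr_pMr // ltr1n.
  have fy : `|f x - f y| < e / 2.
    apply: fxr; apply: le_lt_trans (ler_distD x' x y) _.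
    rewrite (splitr r) ltrD //.
    exact: lt_le_trans x'y (le_trans (ler_norm _) (ltW eta0)).
  apply: le_lt_trans (ler_distD (f x) _ _) _.
  by rewrite (splitr e) ltrD // distrC.
move=> /nbhs_ballP [eta /= eta0 etaK].
exists (eta / 2); first by rewrite divr_gt0.
move=> x y Kx xy; apply: (etaK (eta / 2)) Kx y xy.
rewrite /ball /= sub0r normrN gtr0_norm ?divr_gt0 //.
by rewrite ltr_pdivrMr // ltr_pMr // ltr1n.
Qed.

Lemma norm_le_add_decomp {R : realFieldType} {V : normedModType R}
    (v : V) (a b : R) : 0 < a -> 0 <= b -> `|v| <= a + b ->
  exists2 u : V, `|u| <= a & `|v - u| <= b.
Proof.
move=> a0 b0 vab; have ab0 : 0 < a + b by rewrite ltr_wpDr.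
pose c := a / (a + b).
have c0 : 0 <= c by rewrite divr_ge0 // ltW.
have c1 : c <= 1 by rewrite ler_pdivrMr // mul1r lerDl.
exists (c *: v).
  rewrite normrZ ger0_norm // (le_trans (ler_wpM2l c0 vab)) //.
  by rewrite /c divfK // gt_eqF.
rewrite -{1}[v]scale1r -scalerBl normrZ ger0_norm ?subr_ge0 //.
rewrite (le_trans (ler_wpM2l _ vab)) ?subr_ge0 //.
by rewrite mulrBl mul1r divfK ?gt_eqF // addrC addKr.
Qed.

Lemma compact_thickening {R : realType} {n : nat} (S : set 'rV[R]_n) (r : R) :
  compact S -> exists2 K : set 'rV[R]_n, compact K &
    forall x dx, S x -> `|dx| <= r -> K (x + dx).
Proof.
move=> /compact_bounded [M [_ SM]].
exists [set y | `|y| <= M + 1 + r]; first exact: compact_norm_le.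
move=> x dx Sx dxr; rewrite /= (le_trans (ler_normD _ _)) // lerD //.
by apply: SM => //; rewrite ltrDl.
Qed.

Section coupling.
Local Open Scope ereal_scope.

Lemma ge0_integral_marginal d1 d2 (T1 : measurableType d1)
    (T2 : measurableType d2) (R : realType) (mu : {measure set T1 -> \bar R})
    (P : {measure set T2 -> \bar R}) (h : T1 -> T2) (f : T2 -> \bar R) :
  measurable_fun setT h ->
  (forall B, measurable B -> P B = mu (h @^-1` B)) ->
  measurable_fun setT f -> (forall y, 0 <= f y) ->
  \int[P]_y f y = \int[mu]_x f (h x).
Proof.
move=> mh Ph mf f0; transitivity (\int[pushforward mu h]_y f y).
  by apply: eq_measure_integral => B mB _; rewrite Ph.
exact: ge0_integral_pushforward.
Qed.

Context {R : realType} {n : nat} {P Q : probability 'rV[R]_n R}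
  {lam : probability ('rV[R]_n * 'rV[R]_n)%type R}.
Hypothesis lamPQ : coupling P Q lam.

Lemma coupling_integral_fst (f : 'rV[R]_n -> \bar R) :
  measurable_fun setT f -> (forall x, 0 <= f x) ->
  \int[P]_x f x = \int[lam]_z f z.1.
Proof.
apply: ge0_integral_marginal => [|B mB]; first exact: measurable_fst.
by rewrite -setXT; apply/esym/lamPQ.1.
Qed.

Lemma coupling_integral_snd (f : 'rV[R]_n -> \bar R) :
  measurable_fun setT f -> (forall x, 0 <= f x) ->
  \int[Q]_x f x = \int[lam]_z f z.2.
Proof.
apply: ge0_integral_marginal => [|B mB]; first exact: measurable_snd.
by rewrite -setTX; apply/esym/lamPQ.2.
Qed.

Lemma coupling_ae_fst (A : set 'rV[R]_n) :
  {ae P, forall x, A x} -> {ae lam, forall z, A z.1}.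
Proof.
move=> [N [mN PN AN]]; exists (N `*` setT); split.
- exact: measurableX.
- by rewrite -PN; exact: lamPQ.1.
- by move=> z /= nAz; split => //; apply: AN.
Qed.

End coupling.

Section latent_robustness.
Context {R : realType} {d0 d : nat}.
Variables (S : set 'rV[R]_d0) (eps : R) (g : 'rV[R]_d0 -> 'rV[R]_d)
  (ginv : 'rV[R]_d -> 'rV[R]_d0) (ell : 'rV[R]_d0 -> R).

Definition latent_radius : R :=
  sup [set r : R | exists2 x, S x &
    exists2 dx : 'rV[R]_d0, `|dx| <= eps & r = `|g x - g (x + dx)|].

Definition latent_worst_loss (x : 'rV[R]_d0) : \bar R :=
  ereal_sup [set (ell (ginv (g x + dz)))%:E
            | dz in [set dz : 'rV[R]_d | `|dz| <= latent_radius]].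

Hypotheses (cS : compact S) (eps0 : 0 < eps) (cg : continuous g)
  (cginv : continuous ginv) (cell : continuous ell)
  (ell_ge0 : forall x, 0 <= ell x)
  (on_manifold : forall x, ell x = ell (ginv (g x))).

Lemma latent_radius_ub x dx : S x -> `|dx| <= eps ->
  `|g x - g (x + dx)| <= latent_radius.
Proof.
move=> Sx dxe; apply: sup_upper_bound; last by exists x => //; exists dx.
split; first by exists `|g x - g (x + dx)|, x => //; exists dx.
have [K cK SK] := compact_thickening _ eps cS.
have /compact_bounded [B [_ gB]] : compact (g @` K).
  by apply: continuous_compact => //; exact: continuous_subspaceT.
have {}gB y : K y -> `|g y| <= B + 1.
  by move=> Ky; apply: gB; [rewrite ltrDl | exists y].
exists (B + 1 + (B + 1)) => _ [x' Sx' [dx' dx'e ->]].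
rewrite (le_trans (ler_normB _ _)) // lerD // gB //; last exact: SK.
by rewrite -[x']addr0; apply: SK; rewrite // normr0 ltW.
Qed.

Lemma latent_radius_ge0 : 0 <= latent_radius.
Proof.
have [[x Sx]|noS] := pselect (exists x, S x).
  apply: le_trans (latent_radius_ub x 0 Sx _) => //.
  by rewrite normr0 ltW.
rewrite /latent_radius (_ : [set r : R | _] = set0) ?sup0 //.
by apply/seteqP; split => // r [x Sx]; case: noS; exists x.
Qed.

Lemma measurable_latent_worst_loss : measurable_fun setT latent_worst_loss.
Proof.
apply: rV_lower_semicontinuous_measurable.
apply: lower_semicontinuous_ereal_sup => dz x.
have gdz : {for x, continuous (fun y => g y + dz)}.
  by apply: continuousD; [exact: cg | exact: cst_continuous].
exact: continuous_comp (continuous_comp gdz (cginv _)) (cell _).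
Qed.

Lemma loss_le_latent_worst_loss x : ((ell x)%:E <= latent_worst_loss x)%E.
Proof.
apply: ereal_sup_ubound; exists 0; first by rewrite /= normr0 latent_radius_ge0.
by rewrite addr0 -on_manifold.
Qed.

Lemma latent_worst_loss_ge0 x : (0 <= latent_worst_loss x)%E.
Proof. by apply: le_trans _ (loss_le_latent_worst_loss x); rewrite lee_fin. Qed.

Lemma displaced_loss_le_latent_worst_loss x dx : S x -> `|dx| <= eps ->
  ((ell (x + dx))%:E <= latent_worst_loss x)%E.
Proof.
move=> Sx dxe; rewrite on_manifold; apply: ereal_sup_ubound.
exists (g (x + dx) - g x); last by rewrite addrC subrK.
by rewrite /= distrC latent_radius_ub.
Qed.

Lemma loss_le_latent_worst_loss_near (gam : R) : 0 < gam ->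
  exists2 eta : R, 0 < eta & forall x y, S x -> `|y - x| <= eps + eta ->
    ((ell y)%:E <= latent_worst_loss x + gam%:E)%E.
Proof.
move=> gam0; have [K cK SK] := compact_thickening _ eps cS.
have [eta eta0 ellK] := compact_uniform_continuity _ _ cK cell _ gam0.
have eta20 : 0 < eta / 2 by rewrite divr_gt0.
exists (eta / 2) => // x y Sx yx.
have [dx dxe ydx] := norm_le_add_decomp _ _ _ eps0 (ltW eta20) yx.
have xdxy : `|x + dx - y| < eta.
  rewrite distrC opprD addrA (le_lt_trans ydx) //.
  by rewrite ltr_pdivrMr // ltr_pMr // ltr1n.
have := ellK _ _ (SK _ _ Sx dxe) xdxy.
rewrite ltr_distlC => /andP [_ /ltW ellyx].
apply: (@le_trans _ _ (ell (x + dx) + gam)%:E); first by rewrite lee_fin.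
rewrite EFinD leeD2r //.
exact: displaced_loss_le_latent_worst_loss.
Qed.

Lemma integral_le_latent_worst_loss (P0 P : probability 'rV[R]_d0 R) :
  {ae P0, forall x, S x} -> (W_inf P0 P <= eps%:E)%E ->
  forall gam : R, 0 < gam ->
  (\int[P]_x (ell x)%:E <= \int[P0]_x latent_worst_loss x + gam%:E)%E.
Proof.
move=> P0S WP gam gam0.
have [eta eta0 ell_near] := loss_le_latent_worst_loss_near _ gam0.
have /ereal_inf_lt [_ [lam lamP0P <-]] : (W_inf P0 P < (eps + eta)%:E)%E.
  by apply: le_lt_trans WP _; rewrite lte_fin ltrDl.
move=> /ltW /ess_supP lam_near.
have lamS := coupling_ae_fst lamP0P _ P0S.
have mell := rV_continuous_measurable _ cell.
have mF := measurable_latent_worst_loss.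
rewrite (coupling_integral_snd lamP0P _ mell) => [|x]; last by rewrite lee_fin.
rewrite (coupling_integral_fst lamP0P _ mF latent_worst_loss_ge0).
have -> : gam%:E = (\int[lam]_z cst gam%:E z)%E.
  by rewrite integral_cst // [X in (_ * X)%E]probability_setT mule1.
rewrite -ge0_integralD //; last 3 first.
- by move=> z _; exact: latent_worst_loss_ge0.
- exact: measurableT_comp mF measurable_fst.
- by move=> z _; rewrite lee_fin ltW.
apply: ae_ge0_le_integral => //.
- by move=> z _; rewrite lee_fin.
- exact: measurableT_comp mell measurable_snd.
- by move=> z _; rewrite adde_ge0 ?latent_worst_loss_ge0 // lee_fin ltW.
- by apply: emeasurable_funD => //; exact: measurableT_comp mF measurable_fst.
apply: filterS2 lam_near lamS => z z12 Sz1 _.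
by apply: ell_near => //; rewrite distrC -lee_fin.
Qed.

End latent_robustness.

Theorem lemma1 (R : realType) (d0 d : nat) (P0 : probability 'rV[R]_d0 R)
  (S : set 'rV[R]_d0) (eps : R) (g : 'rV[R]_d0 -> 'rV[R]_d)
  (ginv : 'rV[R]_d -> 'rV[R]_d0) (ell : 'rV[R]_d0 -> R) (M : R) :
  (d < d0)%N ->
  prob_support P0 = S -> compact S ->
  0 < eps ->
  continuous g -> continuous ginv ->
  continuous ell -> (forall x, 0 <= ell x <= M) ->
  (forall x, ell x = ell (ginv (g x))) ->
  let eps_z : R :=
    sup [set r : R | exists2 x, S x &
           exists2 dx : 'rV[R]_d0, `|dx| <= eps & r = `|g x - g (x + dx)|] in
  (ereal_sup [set (\int[P]_x (ell x)%:E)%E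
             | P in [set P : probability 'rV[R]_d0 R | (W_inf P0 P <= eps%:E)%E]]
   <= \int[P0]_x ereal_sup [set (ell (ginv (g x + dz)%R))%:E
                           | dz in [set dz : 'rV[R]_d | (`|dz| <= eps_z)%R]])%E.
Proof.
move=> _ suppS cS eps0 cg cginv cell ellM on_manifold; cbv zeta.
have ell_ge0 x : 0 <= ell x by case/andP: (ellM x).
have P0S : {ae P0, forall x, S x} by rewrite -suppS; exact: prob_support_ae.
apply: ge_ereal_sup => _ [P WP <-]; apply/lee_addgt0Pr => gam gam0.
exact: (integral_le_latent_worst_loss _ _ _ _ _ cS eps0 cg cginv cell ell_ge0
  on_manifold _ _ P0S WP _ gam0).
Qed.
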